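(* Let $K$ be a simplicial complex and $G$ be an Abelian group. The reduced $L$-spectral sequence of $K$ over $G$ satisfies $\widetilde L_{s,s+t+1}(K;G)=\oplus_{|\sigma|=s}\, \widetilde H^{t}({\rm link}_K\sigma;G)$ and $(\widetilde L_{*,*}(K;G),\partial_1)=(\oplus_{\sigma\in K}\,\widetilde H^{*}({\rm link}_K\sigma;G),\partial_1)$, where $\partial_1$ on the right side is defined as follows. Denote $x\in\widetilde H^*({\rm link}_K\sigma;G)$ by $[x]_{\sigma}$ in $\oplus_{\sigma\in K}\,\widetilde H^{*}({\rm link}_K\sigma;G)$. Then $\partial_1([x]_{\sigma})=\sum_{i=0}^n[\psi_{\sigma}^{\sigma_i}(x)]_{\sigma_i}$, where $\sigma=\{v_0,\cdots,v_n\}$, $\sigma_i=\sigma-\{v_i\}$, and $\psi_{\sigma}^{\sigma_i}=(\widetilde\psi_{\sigma}^{\sigma_i})^*$ is the cohomology homomorphism induced by the cochain map $\widetilde\psi^{\sigma_i}_{\sigma}\colon\widetilde C_*({\rm link}_K\sigma;G)\to\widetilde C_{*+1}({\rm link}_K\sigma_i;G)$, $\widetilde\psi_{\sigma}^{\sigma_i}(\tau)=\tau\cup[v_i]$ for all chain simplexes $\tau\in{\rm link}_K\sigma$. The (unreduced) $L$-spectral sequence of $K$ over $G$ satisfies $L_{s,s+t+1}(K;G)=\oplus_{|\sigma|=s}\, \widetilde H^{t}({\rm link}_K\sigma;G)$ and $(L_{*,*}(K;G),\partial_1)=(\oplus_{\sigma\in K,\sigma\neq\phi}\,\widetilde H^{*}({\rm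 link}_K\sigma;G),\partial_1)$, where for $x\in\widetilde H^*({\rm link}_{K}\sigma;G)$, $\partial_1([x]_{\sigma})=\sum_{i=0}^n[\psi_{\sigma}^{\sigma_i}(x)]_{\sigma_i}$ (with $\psi_{\sigma}^{\sigma_i}$ as in the reduced case) if $|\sigma|>0$, and $\partial_1([x]_{\sigma})=0$ if $|\sigma|=0$. For any $n\geqslant 0$ there is an exact sequence \[0\to L\widetilde H_{0,n}(K;G)\to LH_{0,n}(K;G)\to\widetilde H^n(K;G)\to L\widetilde H_{-1,n}(K;G)\to 0,\] and $LH_{s,n}(K;G)=L\widetilde H_{s,n}(K;G)$ if $s>0$.
   Context: $K$ is a finite abstract simplicial complex with vertex set $S$; ${\rm link}_K\sigma=\{\tau\in K\mid\sigma\cup\tau\in K,\ \sigma\cap\tau=\phi\}$. $C_k(K)$ is the Abelian group generated by ordered sequences (chain simplexes) $[v_0,\cdots,v_k]$ of vertices, modulo: it is $0$ if a vertex repeats or $\{v_0,\dots,v_k\}\notin K$, and swapping two entries changes sign; $C_{-1}(K)$ is generated by $[\,]$. $C_*(K)=\oplus_{k\geqslant0}C_k(K)$, $\widetilde C_*(K)=\oplus_{k\geqslant -1}C_k(K)$. Differentials: $d[v_0,\cdots,v_k]=\sum_i(-1)^i[v_0,\cdots,\hat v_i,\cdots,v_k]$ ($d[v_0]=[\,]$) and $\delta[v_0,\cdots,v_k]=\sum_{v\in S}[v,v_0,\cdots,v_k]$ ($\delta[\,]=\sum_{v\in S}[v]$). $\widetilde H^*(K;G)=H^*(\widetilde C_*(K)\otimes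 G,\delta)$. For chain simplexes with disjoint vertex sets, $\sigma\cup\tau$ denotes concatenation of the sequences. The double complex $T_{*,*}(K)$ (resp. $\widetilde T_{*,*}(K)$) is the double subcomplex of $(C_*(K),d)\otimes(C_*(K),\delta)$ (resp. $(\widetilde C_*(K),d)\otimes(\widetilde C_*(K),\delta)$) generated by $\sigma\otimes\tau$ with $\sigma\subset\tau$, $T_{s,t}$ spanned by such with $|\sigma|=s$, $|\tau|=t$, and $\partial(\sigma\otimes\tau)=(d\sigma)\otimes\tau+(-1)^{|\sigma|}\sigma\otimes(\delta\tau)$; with coefficients, tensor with $G$. The (reduced) $L$-spectral sequence $\{L^r_{s,t}\}$ (resp. $\{\widetilde L^r_{s,t}\}$) is induced by the horizontal filtration $\oplus_{s\leqslant n}T_{s,*}$ (resp. $\oplus_{s\leqslant n}\widetilde T_{s,*}$), with $\partial_r\colon L^r_{s,t}\to L^r_{s-r,t-r+1}$; $L_{*,*}=L^1_{*,*}$, $\widetilde L_{*,*}=\widetilde L^1_{*,*}$, and the $L$-homology is $LH_{s,t}=L^2_{s,t}$, reduced $L$-homology $L\widetilde H_{s,t}=\widetilde L^2_{s,t}$. *)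

From HB Require Import structures.
From mathcomp Require Import all_boot all_order all_algebra.
Set Implicit Arguments. Unset Strict Implicit. Unset Printing Implicit Defensive.
Import GRing.Theory.
Local Open Scope ring_scope.

Section LSpectral.
Variable S : finType.
Variable G : zmodType.

Definition simplicial_complex (K : {set {set S}}) : Prop :=
  set0 \in K /\ (forall v : S, [set v] \in K) /\
  (forall sigma tau : {set S}, sigma \in K -> tau \subset sigma -> tau \in K).

Definition link (K : {set {set S}}) (sigma : {set S}) : {set {set S}} :=
  [set tau | (sigma :|: tau \in K) && [disjoint sigma & tau]].

(* dimension of a simplex: |sigma| in the paper (so |[]| = -1) *)
Definition dim (sigma : {set S}) : int := (#|sigma|%:Z - 1)%R.

(* A chain simplex is identified, via the fixed total order of the finite
   type S (enum_rank), with +/- the increasingly ordered sequence. *)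
Definition vlt (u v : S) : bool := (enum_rank u < enum_rank v)%N.
Definition count_lt (v : S) (A : {set S}) : nat := #|[set u in A | vlt u v]|.
Definition count_gt (v : S) (A : {set S}) : nat := #|[set u in A | vlt v u]|.
Definition sgnz (n : nat) (x : G) : G := if odd n then - x else x.

(* an element of C~_n(L) (x) G: coefficient of each increasingly ordered simplex *)
Definition supp1 (L : {set {set S}}) (n : int) (f : {ffun {set S} -> G}) : Prop :=
  forall rho, f rho != 0 -> (rho \in L) && (dim rho == n).

(* delta [v_0..v_k] = sum_v [v, v_0, .., v_k], in coefficients *)
Definition cobd (L : {set {set S}}) (f : {ffun {set S} -> G}) : {ffun {set S} -> G} :=
  [ffun rho : {set S} => if rho \in L then \sum_(v in rho) sgnz (count_lt v rho) (f (rho :\ v))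
               else 0].

(* H~^n(L;G) = H(C~_*(L) (x) G, delta) at degree n, as a subquotient:
   cycles HZ, boundaries HB *)
Definition HZ (L : {set {set S}}) (n : int) (f : {ffun {set S} -> G}) : Prop :=
  supp1 L n f /\ cobd L f = 0.
Definition HB (L : {set {set S}}) (n : int) (f : {ffun {set S} -> G}) : Prop :=
  exists g, supp1 L (n - 1) g /\ f = cobd L g.

Local Notation V2 := {ffun {set S} * {set S} -> G}.

(* sigma (x) tau is a generator of T~ (any sigma), of T (sigma nonempty) *)
Definition adm (red : bool) (sigma : {set S}) : bool := red || (sigma != set0).

Definition Tsupp (red : bool) (K : {set {set S}}) (s t : int) (x : V2) : Prop :=
  forall p : {set S} * {set S}, x p != 0 ->
    [&& adm red p.1, p.1 \subset p.2, p.2 \in K, dim p.1 == s & dim p.2 == t].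

(* vertical part of the differential: sigma (x) tau |-> (-1)^|sigma| sigma (x) delta tau *)
Definition vert (red : bool) (K : {set {set S}}) (x : V2) : V2 :=
  [ffun p : {set S} * {set S} => if [&& adm red p.1, p.1 \subset p.2 & p.2 \in K] then
     sgnz (#|p.1|.+1)
       (\sum_(v in p.2 :\: p.1) sgnz (count_lt v p.2) (x (p.1, p.2 :\ v)))
   else 0].

(* horizontal part of the differential: sigma (x) tau |-> (d sigma) (x) tau *)
Definition horiz (red : bool) (K : {set {set S}}) (x : V2) : V2 :=
  [ffun p : {set S} * {set S} => if [&& adm red p.1, p.1 \subset p.2 & p.2 \in K] then
     \sum_(v in p.2 :\: p.1) sgnz (count_lt v p.1) (x (v |: p.1, p.2))
   else 0].

(* first page L^1_{s,t} = H(T_{s,*}, vertical part) (E^1 of the horizontal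
   filtration), as a subquotient of V2 *)
Definition L1Z red K s t (x : V2) : Prop := Tsupp red K s t x /\ vert red K x = 0.
Definition L1B red K s t (x : V2) : Prop :=
  exists y, Tsupp red K s (t - 1) y /\ x = vert red K y.

(* second page L^2_{s,t} = H(L^1, partial_1), partial_1 : L^1_{s,t} -> L^1_{s-1,t}
   being induced by the horizontal part *)
Definition L2Z red K s t (x : V2) : Prop :=
  L1Z red K s t x /\ L1B red K (s - 1) t (horiz red K x).
Definition L2B red K s t (x : V2) : Prop :=
  exists y z, L1Z red K (s + 1) t y /\ L1B red K s t z /\ x = horiz red K y + z.

(* element of (+)_{sigma in K, dim sigma = s (, sigma <> empty if not red)}
   C~_t(link sigma) (x) G *)
Definition Asupp (red : bool) (K : {set {set S}}) (s t : int) (x : V2) : Prop :=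
  forall p : {set S} * {set S}, x p != 0 ->
    [&& adm red p.1, p.1 \in K, dim p.1 == s, p.2 \in link K p.1 & dim p.2 == t].

Definition slice (x : V2) (sigma : {set S}) : {ffun {set S} -> G} :=
  [ffun rho : {set S} => x (sigma, rho)].

Definition AZ red K s t (x : V2) : Prop :=
  Asupp red K s t x /\ forall sigma, HZ (link K sigma) t (slice x sigma).
Definition AB red K s t (x : V2) : Prop :=
  Asupp red K s t x /\ forall sigma, HB (link K sigma) t (slice x sigma).

(* psi~^{sigma - v}_{sigma} : tau |-> tau \cup [v] (v appended at the end) *)
Definition psi (v : S) (g : {ffun {set S} -> G}) : {ffun {set S} -> G} :=
  [ffun rho : {set S} => if v \in rho then sgnz (count_gt v (rho :\ v)) (g (rho :\ v)) else 0].

(* partial_1 [x]_sigma = sum_i [psi(x)]_{sigma_i}; zero when the target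
   sigma_i = empty is not allowed (unreduced case, |sigma| = 0) *)
Definition dA (red : bool) (x : V2) : V2 :=
  [ffun p : {set S} * {set S} => if adm red p.1 then
     \sum_(v | v \notin p.1) psi v (slice x (v |: p.1)) p.2
   else 0].

End LSpectral.

(* A subquotient is given by a pair (Z, B) of predicates (subgroups, B <= Z) on
   a zmodType; a homomorphism Z1/B1 -> Z2/B2 is represented by a function on
   representatives which is additive modulo B2 and maps B1 into B2. *)
Section Subquot.
Variables V W U : zmodType.

Definition sq_hom (Z1 B1 : V -> Prop) (Z2 B2 : W -> Prop) (f : V -> W) : Prop :=
  [/\ forall x, Z1 x -> Z2 (f x),
      forall x y, Z1 x -> Z1 y -> B2 (f (x + y) - f x - f y)
    & forall x, B1 x -> B2 (f x)].
End Subquot.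

Section Subquot2.
Variables V W U : zmodType.

Definition sq_iso (Z1 B1 : V -> Prop) (Z2 B2 : W -> Prop) (f : V -> W) (g : W -> V)
  : Prop :=
  [/\ sq_hom Z1 B1 Z2 B2 f, sq_hom Z2 B2 Z1 B1 g,
      forall x, Z1 x -> B1 (g (f x) - x)
    & forall y, Z2 y -> B2 (f (g y) - y)].

Definition sq_inj (Z1 B1 : V -> Prop) (B2 : W -> Prop) (f : V -> W) : Prop :=
  forall x, Z1 x -> B2 (f x) -> B1 x.

Definition sq_surj (Z1 : V -> Prop) (Z2 B2 : W -> Prop) (f : V -> W) : Prop :=
  forall y, Z2 y -> exists x, Z1 x /\ B2 (f x - y).

Definition sq_exact (Z1 : V -> Prop) (Z2 B2 : W -> Prop) (B3 : U -> Prop)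
  (f : V -> W) (g : W -> U) : Prop :=
  (forall x, Z1 x -> B3 (g (f x))) /\
  (forall y, Z2 y -> B3 (g y) -> exists x, Z1 x /\ B2 (f x - y)).
End Subquot2.

(* Writing a generator [sigma (x) tau] of T~ ([sigma] a face of [tau]) as
   [sigma (x) (tau - sigma)], with [tau - sigma] a simplex of [link sigma],
   identifies the column T~_{s,*} with the sum over [|sigma| = s] of the
   cochains of [link sigma] (up to the sign [link_sign]).  Under this
   identification the vertical differential becomes, up to sign, the
   coboundary of each link, so L~^1 is the sum of the H~^*(link sigma); the
   horizontal differential, which moves one vertex of [tau - sigma] into
   [sigma], becomes the sum of the maps psi.  The unreduced T only lacks the
   column [sigma = empty], which is C~(K) with its coboundary; hence both pages
   agree for [s > 0], and comparing them around the columns 0 and -1 gives the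
   four-term exact sequence, whose middle map is the horizontal differential
   into the column -1. *)

From Pilot Require Import Defs.
From HB Require Import structures.
From mathcomp Require Import all_boot all_order all_algebra.
From mathcomp Require Import zify.
From Stdlib Require Import IndefiniteDescription.
Set Implicit Arguments. Unset Strict Implicit. Unset Printing Implicit Defensive.
Import Order.TTheory GRing.Theory Num.Theory.
Local Open Scope ring_scope.

Local Notation dim := Defs.dim.

Section Signs.
Variable G : zmodType.

Lemma sgnz_is_zmod_morphism n : zmod_morphism (@sgnz G n).
Proof. by move=> x y; rewrite /sgnz; case: (odd n); rewrite ?opprD. Qed.

HB.instance Definition _ n :=
  GRing.isZmodMorphism.Build G G (sgnz n) (sgnz_is_zmod_morphism n).

Lemma sgnzD m n (x : G) : sgnz (m + n) x = sgnz m (sgnz n x).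
Proof. by rewrite /sgnz oddD; case: (odd m); case: (odd n); rewrite /= ?opprK. Qed.

Lemma sgnzS n (x : G) : sgnz n.+1 x = - sgnz n x.
Proof. by rewrite -add1n sgnzD. Qed.

Lemma sgnz_odd m n (x : G) : odd m = odd n -> sgnz m x = sgnz n x.
Proof. by rewrite /sgnz => ->. Qed.

Lemma sgnzK n : involutive (@sgnz G n).
Proof. by move=> x; rewrite -sgnzD addnn /sgnz odd_double. Qed.

Lemma sgnz_eq0 n (x : G) : (sgnz n x == 0) = (x == 0).
Proof. by rewrite /sgnz; case: (odd n); rewrite ?oppr_eq0. Qed.

Lemma sumr_neq0_witness (I : finType) (P : pred I) (F : I -> G) :
  \sum_(i | P i) F i != 0 -> exists2 i, P i & F i != 0.
Proof.
move=> nz; have [/existsP[i /andP[Pi Fi]]|/existsPn none] :=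
  boolP [exists i, P i && (F i != 0)]; first by exists i.
case/negP: nz; apply/eqP/big1 => i Pi.
by apply/eqP; move: (none i); rewrite Pi negbK.
Qed.

End Signs.

Ltac parity := rewrite ?(oddD, oddM, oddS) /=;
  repeat match goal with |- context [odd ?n] => case: (odd n) end; by [].

Section VertexOrder.
Variable S : finType.
Implicit Types (u v w : S) (A B : {set S}).

Lemma vlt_irr v : vlt v v = false.
Proof. by rewrite /vlt ltnn. Qed.

Lemma vlt_total v w : v != w -> vlt v w || vlt w v.
Proof.
move=> vw; rewrite /vlt -neq_ltn; apply: contra vw => /eqP h.
by apply/eqP/enum_rank_inj/val_inj.
Qed.

Lemma vlt_asym v w : vlt v w -> ~~ vlt w v.
Proof. by rewrite /vlt -leqNgt => /ltnW. Qed.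

Lemma sum_nat_pred A (P : pred S) :
  (\sum_(u in A) P u)%N = #|[set u in A | P u]|.
Proof.
rewrite -sum1_card big_mkcond [RHS]big_mkcond; apply: eq_bigr => u _ /=.
by rewrite !inE; case: (u \in A); case: (P u).
Qed.

Lemma count_lt0 v : count_lt v set0 = 0%N.
Proof. by rewrite /count_lt -sum_nat_pred big_set0. Qed.

Lemma count_lt1 u v : count_lt u [set v] = vlt v u.
Proof. by rewrite /count_lt -sum_nat_pred big_set1. Qed.

Lemma count_ltU v A B : [disjoint A & B] ->
  count_lt v (A :|: B) = (count_lt v A + count_lt v B)%N.
Proof.
move=> dAB; rewrite /count_lt -!sum_nat_pred -bigU //=.
by apply: eq_bigl => u; rewrite inE.
Qed.

Lemma count_ltU1 u v A : v \notin A ->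
  count_lt u (v |: A) = (count_lt u A + vlt v u)%N.
Proof.
by move=> vA; rewrite setUC count_ltU ?count_lt1 // disjoint_sym disjoints1.
Qed.

Lemma count_lt_gt v A : v \notin A -> (count_lt v A + count_gt v A)%N = #|A|.
Proof.
move=> vA; rewrite /count_lt /count_gt -(cardsID [set u | vlt u v] A).
congr (_ + _)%N; apply: eq_card => u; rewrite !inE andbC //.
have [uA|] := boolP (u \in A); rewrite ?andbF // !andbT.
have uv : u != v by apply: contraNneq vA => <-.
by case/orP: (vlt_total uv) => h; rewrite h ?(negbTE (vlt_asym h)).
Qed.

Lemma count_ltD1_self v A : count_lt v (A :\ v) = count_lt v A.
Proof.
rewrite /count_lt; apply: eq_card => u; rewrite !inE.
by case: eqVneq => [->|]; rewrite ?vlt_irr ?andbF.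
Qed.

(* The number of transpositions sorting the chain [A ++ B] increasingly. *)
Definition inversions A B : nat := (\sum_(u in A) count_lt u B)%N.

Lemma inversionsU1r v A B : v \notin B ->
  inversions A (v |: B) = (inversions A B + count_gt v A)%N.
Proof.
move=> vB; rewrite /inversions (eq_bigr _ (fun u _ => count_ltU1 u vB)).
by rewrite big_split /= sum_nat_pred.
Qed.

Lemma inversionsD1r v A B : v \in B ->
  inversions A B = (inversions A (B :\ v) + count_gt v A)%N.
Proof. by move=> vB; rewrite -{1}(setD1K vB) inversionsU1r // setD11. Qed.

Lemma inversionsU1l v A B : v \notin A ->
  inversions (v |: A) B = (count_lt v B + inversions A B)%N.
Proof. by move=> vA; rewrite /inversions big_setU1. Qed.

End VertexOrder.

Section PairSums.
Variables (S : finType) (G : zmodType).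
Implicit Types (B : {set S}) (F : S -> S -> G).

Lemma exchange_big_setD1 B F :
  \sum_(v in B) \sum_(u in B :\ v) F v u = \sum_(u in B) \sum_(v in B :\ u) F v u.
Proof.
rewrite (exchange_big_dep (mem B)) /= => [|v u _]; last by rewrite inE => /andP[].
by apply: eq_bigr => u uB; apply: eq_bigl => v; rewrite !inE uB andbT andbC eq_sym.
Qed.

(* Pairing [(v, w)] with [(w, v)] only shows that twice the sum vanishes;
   splitting the inner sums along the vertex order avoids dividing by 2 in G. *)
Lemma sum_setD1_antisym B F : (forall v w, v != w -> F w v = - F v w) ->
  \sum_(v in B) \sum_(w in B :\ v) F v w = 0.
Proof.
move=> FN.
have split_at v : v \in B -> \sum_(w in B :\ v) F v w =
    \sum_(w in B) (if vlt v w then F v w else 0) + \sum_(w in B) (if vlt w v then F v w else 0).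
  move=> vB; rewrite -big_split /= big_mkcond [RHS]big_mkcond /=; apply: eq_bigr => w _.
  rewrite !inE; case: (eqVneq w v) => [->|wv] /=; first by rewrite vlt_irr addr0; case: (v \in B).
  case: (w \in B) => //; have := vlt_total wv.
  case h1: (vlt v w); case h2: (vlt w v); rewrite ?addr0 ?add0r //.
  by move: (vlt_asym h1); rewrite h2.
rewrite (eq_bigr _ split_at) big_split /= [X in _ + X]exchange_big -big_split /=.
apply: big1 => v _; rewrite -big_split /=; apply: big1 => w _.
have [vw|] := boolP (vlt v w); last by rewrite addr0.
have nvw : v != w by apply: contraTneq vw => ->; rewrite vlt_irr.
by rewrite FN 1?eq_sym // addNr.
Qed.

End PairSums.

Section SetFacts.
Variable S : finType.
Implicit Types (v : S) (A B : {set S}).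

Lemma setUDKl A B : [disjoint A & B] -> (A :|: B) :\: A = B.
Proof.
move=> dAB; apply/setP => u; rewrite !inE.
by case: (boolP (u \in A)) => //= /(disjointFr dAB) ->.
Qed.

Lemma setDUK A B : A \subset B -> A :|: (B :\: A) = B.
Proof.
move=> /subsetP sAB; apply/setP => u; rewrite !inE.
by case: (boolP (u \in A)) => //= /sAB ->.
Qed.

Lemma disjoint_setD A B : [disjoint A & B :\: A].
Proof. by rewrite disjoints_subset; apply/subsetP => u uA; rewrite !inE uA. Qed.

Lemma setUD1r v A B : v \notin A -> A :|: B :\ v = (A :|: B) :\ v.
Proof.
move=> vA; rewrite setDUl; congr (_ :|: _).
by apply/esym/setDidPl; rewrite disjoint_sym disjoints1.
Qed.

Lemma setU1UD1 v A B : v \in B -> v |: A :|: B :\ v = A :|: B.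
Proof. by move=> vB; rewrite setUAC setD1K // setUC. Qed.

Lemma set1_neq0 v : [set v] != set0.
Proof. by apply/set0Pn; exists v; rewrite inE. Qed.

Lemma dim0 : dim (set0 : {set S}) = -1.
Proof. by rewrite /dim cards0. Qed.

Lemma dim1 v : dim [set v] = 0.
Proof. by rewrite /dim cards1. Qed.

Lemma dimU A B : [disjoint A & B] -> dim (A :|: B) = dim A + dim B + 1.
Proof. by move=> dAB; rewrite /dim cardsU disjoint_setI0 // cards0 subn0; lia. Qed.

Lemma dimD1 v A : v \in A -> dim A = dim (A :\ v) + 1.
Proof. by move=> vA; rewrite /dim (cardsD1 v A) vA; lia. Qed.

Lemma dim_eqN1 A : (dim A == -1) = (A == set0).
Proof. by rewrite -cards_eq0 /dim; lia. Qed.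

End SetFacts.

Section Subquotients.
Variables V W : zmodType.

Lemma sq_hom_additive (Z1 B1 : V -> Prop) (Z2 B2 : W -> Prop) (f : {additive V -> W}) :
  B2 0 -> (forall x, Z1 x -> Z2 (f x)) -> (forall x, B1 x -> B2 (f x)) ->
  sq_hom Z1 B1 Z2 B2 f.
Proof. by move=> B20 fZ fB; split=> // x y _ _; rewrite raddfD addrAC addrK subrr. Qed.

End Subquotients.

Section Differentials.
Variables (S : finType) (G : zmodType).
Local Notation V1 := {ffun {set S} -> G}.
Local Notation V2 := {ffun {set S} * {set S} -> G}.
Variables (red : bool) (K : {set {set S}}).

Lemma vert_is_zmod_morphism : @zmod_morphism V2 V2 (vert red K).
Proof.
move=> x y; apply/ffunP => p; rewrite !ffunE; case: ifP => _; last by rewrite subr0.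
by rewrite -raddfB -sumrB; congr sgnz; apply: eq_bigr => v _; rewrite !ffunE raddfB.
Qed.

HB.instance Definition _ :=
  GRing.isZmodMorphism.Build V2 V2 (vert red K) vert_is_zmod_morphism.

Lemma horiz_is_zmod_morphism : @zmod_morphism V2 V2 (horiz red K).
Proof.
move=> x y; apply/ffunP => p; rewrite !ffunE; case: ifP => _; last by rewrite subr0.
by rewrite -sumrB; apply: eq_bigr => v _; rewrite !ffunE raddfB.
Qed.

HB.instance Definition _ :=
  GRing.isZmodMorphism.Build V2 V2 (horiz red K) horiz_is_zmod_morphism.

Lemma cobd_is_zmod_morphism L : @zmod_morphism V1 V1 (cobd L).
Proof.
move=> f g; apply/ffunP => rho; rewrite !ffunE; case: ifP => _; last by rewrite subr0.
by rewrite -sumrB; apply: eq_bigr => v _; rewrite !ffunE raddfB.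
Qed.

HB.instance Definition _ L :=
  GRing.isZmodMorphism.Build V1 V1 (cobd L) (cobd_is_zmod_morphism L).

Lemma cobd_sgnz L n (f : V1) :
  cobd L [ffun rho => sgnz n (f rho)] = [ffun rho => sgnz n (cobd L f rho)].
Proof.
apply/ffunP => rho; rewrite !ffunE; case: ifP => _; last by rewrite raddf0.
rewrite raddf_sum; apply: eq_bigr => v _; rewrite ffunE /= -!sgnzD; apply: sgnz_odd.
parity.
Qed.

Lemma sliceB (x y : V2) (A : {set S}) : slice (x - y) A = slice x A - slice y A.
Proof. by apply/ffunP => B; rewrite !ffunE. Qed.

Lemma slice0 (A : {set S}) : slice (0 : V2) A = 0.
Proof. by apply/ffunP => B; rewrite !ffunE. Qed.

Lemma supp1N L n (f : V1) : supp1 L n f -> supp1 L n (- f).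
Proof. by move=> Hf rho; rewrite ffunE oppr_eq0 => /Hf. Qed.

Lemma Tsupp0 s t : Tsupp red K s t (0 : V2).
Proof. by move=> p; rewrite ffunE eqxx. Qed.

Lemma Tsupp_vert s t (x : V2) : Tsupp red K s t x -> Tsupp red K s (t + 1) (vert red K x).
Proof.
move=> Hx [A B]; rewrite ffunE /=; case: ifP => [/and3P[a AB BK]|]; last by rewrite eqxx.
rewrite sgnz_eq0 => /sumr_neq0_witness[v]; rewrite inE => /andP[_ vB].
rewrite sgnz_eq0 => /Hx /and5P[_ _ _ ds dt].
by rewrite a AB BK ds (dimD1 vB) (eqP dt) eqxx.
Qed.

Lemma Tsupp_subset s t (x : V2) : Tsupp red K s t x ->
  forall p : {set S} * {set S}, x p != 0 -> p.1 \subset p.2.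
Proof. by move=> Hx p /Hx /and5P[]. Qed.

Lemma Tsupp_eq0 s t (x : V2) (A B : {set S}) : Tsupp red K s t x ->
  ~~ [&& adm red A, A \subset B, B \in K, dim A == s & dim B == t] -> x (A, B) = 0.
Proof. by move=> Hx h; apply/eqP; apply: contraNT h => /Hx. Qed.

Lemma Asupp_disjoint s t (y : V2) : Asupp red K s t y ->
  forall p : {set S} * {set S}, y p != 0 -> [disjoint p.1 & p.2].
Proof. by move=> Hy p /Hy /and5P[_ _ _]; rewrite inE => /andP[]. Qed.

Lemma Asupp_eq0 s t (y : V2) (A B : {set S}) : Asupp red K s t y ->
  ~~ [&& adm red A, A \in K, dim A == s, B \in link K A & dim B == t] -> y (A, B) = 0.
Proof. by move=> Hy h; apply/eqP; apply: contraNT h => /Hy. Qed.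

Lemma L1B0 s t : L1B red K s t (0 : V2).
Proof. by exists 0; rewrite raddf0; split=> //; apply: Tsupp0. Qed.

Lemma HB0 L n : HB L n (0 : V1).
Proof. by exists 0; rewrite raddf0; split=> // rho; rewrite ffunE eqxx. Qed.

Lemma AB0 s t : AB red K s t (0 : V2).
Proof. by split=> [p|A]; rewrite ?slice0 ?ffunE ?eqxx //; apply: HB0. Qed.

End Differentials.

Section LinkCoordinates.
Variables (S : finType) (G : zmodType).
Local Notation V2 := {ffun {set S} * {set S} -> G}.
Implicit Types (x y : V2) (A B : {set S}) (v : S) (K : {set {set S}}) (red : bool).

Lemma disjointU1D1 v A B : v \notin A -> [disjoint v |: A & B :\ v] = [disjoint A & B].
Proof.
move=> vA; rewrite -!setI_eq0; congr (_ == set0); apply/setP => u; rewrite !inE.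
by case: (eqVneq u v) => [->|] /=; rewrite ?(negbTE vA) ?andbF.
Qed.

(* The quadratic term is the sign correction under which the horizontal
   differential becomes exactly [dA] (see [to_link_horiz]). *)
Definition link_sign A B : nat := (#|A| * (#|A| + #|B| + 1) + inversions A B)%N.

Definition to_link x : V2 := [ffun p : {set S} * {set S} => if [disjoint p.1 & p.2] then
  sgnz (link_sign p.1 p.2) (x (p.1, p.1 :|: p.2)) else 0].

Definition of_link y : V2 := [ffun p : {set S} * {set S} => if p.1 \subset p.2 then
  sgnz (link_sign p.1 (p.2 :\: p.1)) (y (p.1, p.2 :\: p.1)) else 0].

Lemma to_link_is_zmod_morphism : @zmod_morphism V2 V2 to_link.
Proof.
by move=> x y; apply/ffunP => p; rewrite !ffunE; case: ifP; rewrite ?subr0 // ?ffunE raddfB.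
Qed.

HB.instance Definition _ :=
  GRing.isZmodMorphism.Build V2 V2 to_link to_link_is_zmod_morphism.

Lemma of_link_is_zmod_morphism : @zmod_morphism V2 V2 of_link.
Proof.
by move=> x y; apply/ffunP => p; rewrite !ffunE; case: ifP; rewrite ?subr0 // ?ffunE raddfB.
Qed.

HB.instance Definition _ :=
  GRing.isZmodMorphism.Build V2 V2 of_link of_link_is_zmod_morphism.

Lemma to_linkK x : (forall p : {set S} * {set S}, x p != 0 -> p.1 \subset p.2) ->
  of_link (to_link x) = x.
Proof.
move=> Hx; apply/ffunP => -[A B]; rewrite !ffunE /=.
case: ifP => AB; first by rewrite disjoint_setD setDUK // sgnzK.
by apply/esym/eqP; apply: contraFT AB => /Hx.
Qed.

Lemma of_linkK y : (forall p : {set S} * {set S}, y p != 0 -> [disjoint p.1 & p.2]) ->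
  to_link (of_link y) = y.
Proof.
move=> Hy; apply/ffunP => -[A B]; rewrite !ffunE /=.
case: ifP => AB; first by rewrite subsetUl setUDKl // sgnzK.
by apply/esym/eqP; apply: contraFT AB => /Hy.
Qed.

Lemma Asupp_to_link red K s t x : simplicial_complex K ->
  Tsupp red K s (s + t + 1) x -> Asupp red K s t (to_link x).
Proof.
move=> [_ [_ HKsub]] Hx [A B]; rewrite ffunE /=; case: ifP => AB; last by rewrite eqxx.
rewrite sgnz_eq0 => /Hx /and5P[/= a _ ABK ds].
rewrite a ds inE ABK AB (HKsub _ _ ABK (subsetUl _ _)) dimU // (eqP ds) /=.
by move=> /eqP dt; apply/eqP; lia.
Qed.

Lemma Tsupp_of_link red K s t y :
  Asupp red K s t y -> Tsupp red K s (s + t + 1) (of_link y).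
Proof.
move=> Hy [A B]; rewrite ffunE /=; case: ifP => AB; last by rewrite eqxx.
rewrite sgnz_eq0 => /Hy /and5P[/= a _ ds lk dt].
move: lk; rewrite inE setDUK // => /andP[BK _].
by rewrite a BK ds -(setDUK AB) dimU ?disjoint_setD // (eqP ds) (eqP dt) eqxx.
Qed.

Lemma cobd_to_link red K x A B : adm red A -> B \in link K A ->
  cobd (link K A) (slice (to_link x) A) B =
  sgnz (link_sign A B + #|A| + 1) (vert red K x (A, A :|: B)).
Proof.
move=> a lk; move: (lk); rewrite inE => /andP[ABK dAB].
rewrite !ffunE /= lk a subsetUl ABK /= setUDKl // -sgnzD raddf_sum /=.
apply: eq_bigr => v vB; rewrite !ffunE /=.
have vA : v \notin A by rewrite (disjointFl dAB vB).
rewrite (disjointWr (subD1set B v) dAB) setUD1r // -!sgnzD; apply: sgnz_odd.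
rewrite /link_sign count_ltU // -(count_ltD1_self v B) (inversionsD1r _ vB).
by rewrite (cardsD1 v B) vB -(count_lt_gt vA); parity.
Qed.

Lemma to_link_vert red K x A B : adm red A -> B \in link K A ->
  to_link (vert red K x) (A, B) = sgnz #|A|.+1 (cobd (link K A) (slice (to_link x) A) B).
Proof.
move=> a lk; rewrite (cobd_to_link x a lk) ffunE /=.
move: lk; rewrite inE => /andP[_ ->]; rewrite -sgnzD; apply: sgnz_odd; parity.
Qed.

Lemma psi_slice_to_link x v A B : v \notin A ->
  psi v (slice (to_link x) (v |: A)) B = if (v \in B) && [disjoint A & B] then
    sgnz (count_gt v (B :\ v) + link_sign (v |: A) (B :\ v)) (x (v |: A, A :|: B))
  else 0.
Proof.
move=> vA; rewrite !ffunE /=; case: (boolP (v \in B)) => //= vB.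
rewrite disjointU1D1 // setU1UD1 //.
by case: ifP; rewrite ?raddf0 // -sgnzD.
Qed.

Lemma to_link_horiz red K x : (forall p : {set S} * {set S}, x p != 0 -> p.2 \in K) ->
  to_link (horiz red K x) = dA red (to_link x).
Proof.
move=> HxK; apply/ffunP => -[A B]; rewrite !ffunE /=.
have [_|na] := boolP (adm red A); last by case: ifP; rewrite ?raddf0.
under [RHS]eq_bigr => v vA do rewrite psi_slice_to_link //.
case: ifP => dAB; last by apply/esym; apply: big1 => v _; rewrite andbF.
have inB v : [&& v \notin A, v \in B & true] = (v \in B).
  by rewrite andbT; case: (boolP (v \in B)) => vB; rewrite ?andbF ?(disjointFl dAB vB).
rewrite -big_mkcondr (eq_bigl _ _ inB) subsetUl setUDKl //=.
have [ABK|ABK] := boolP (A :|: B \in K); last first.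
  rewrite raddf0; apply/esym; apply: big1 => v vB; rewrite (_ : x _ = 0) ?raddf0 //.
  by apply/eqP; apply: contraNT ABK => /HxK.
rewrite raddf_sum /=; apply: eq_bigr => v vB; have vA : v \notin A by rewrite (disjointFl dAB vB).
rewrite -sgnzD; apply: sgnz_odd.
have vBv : v \notin B :\ v by rewrite setD11.
rewrite /link_sign (inversionsD1r _ vB) inversionsU1l // cardsU1 vA (cardsD1 v B) vB.
by rewrite -(count_lt_gt vA) -(count_lt_gt vBv); parity.
Qed.

End LinkCoordinates.

Section FirstPage.
Variables (S : finType) (G : zmodType).
Local Notation V1 := {ffun {set S} -> G}.
Local Notation V2 := {ffun {set S} * {set S} -> G}.
Variables (K : {set {set S}}) (red : bool).
Hypothesis HK : simplicial_complex K.

Lemma AZ_to_link s t (x : V2) : L1Z red K s (s + t + 1) x -> AZ red K s t (to_link x).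
Proof.
move=> [Hx Hvx]; have Hy := Asupp_to_link HK Hx; split=> // A; split.
  by move=> B; rewrite ffunE => /Hy /and5P[_ _ _ -> ->].
apply/ffunP => B; rewrite [RHS]ffunE.
have [a|na] := boolP (adm red A); last first.
  rewrite ffunE; case: ifP => // _; apply: big1 => v _.
  by rewrite ffunE (Asupp_eq0 Hy) ?raddf0 // (negbTE na).
have [lk|nlk] := boolP (B \in link K A); last by rewrite ffunE (negbTE nlk).
by rewrite (cobd_to_link x a lk) Hvx ffunE raddf0.
Qed.

Lemma L1Z_of_link s t (y : V2) : AZ red K s t y -> L1Z red K s (s + t + 1) (of_link y).
Proof.
move=> [Hy Hz]; split; first exact: Tsupp_of_link.
apply/ffunP => -[A B]; rewrite [RHS]ffunE ffunE /=.
case: ifP => // /and3P[a AB BK].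
have lk : B :\: A \in link K A by rewrite inE setDUK // BK disjoint_setD.
have := cobd_to_link (of_link y) a lk.
rewrite (of_linkK (Asupp_disjoint Hy)) (Hz A).2 ffunE setDUK // ffunE /= a AB BK /=.
by move/(congr1 (sgnz (link_sign A (B :\: A) + #|A| + 1))); rewrite raddf0 sgnzK => <-.
Qed.

Lemma AB_to_link s t (x : V2) : L1B red K s (s + t + 1) x -> AB red K s t (to_link x).
Proof.
move=> [w [Hw ->]]; rewrite addrK in Hw.
have Hw' : Tsupp red K s (s + (t - 1) + 1) w by rewrite -addrA subrK.
have Hy := Asupp_to_link HK (Tsupp_vert Hw).
have Hy' := Asupp_to_link HK Hw'.
split=> // A; exists [ffun B => sgnz #|A|.+1 (slice (to_link w) A B)]; split.
  by move=> B; rewrite ffunE sgnz_eq0 ffunE => /Hy' /and5P[_ _ _ -> ->].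
apply/ffunP => B; rewrite ffunE /=.
have [a|na] := boolP (adm red A); last first.
  rewrite (Asupp_eq0 Hy) ?(negbTE na) // ffunE; case: ifP => // _.
  by apply/esym/big1 => v _; rewrite 2!ffunE (Asupp_eq0 Hy') ?raddf0 // (negbTE na).
have [lk|nlk] := boolP (B \in link K A); last first.
  by rewrite (Asupp_eq0 Hy) ?(negbTE nlk) ?andbF // ffunE (negbTE nlk).
by rewrite (to_link_vert w a lk) cobd_sgnz [RHS]ffunE.
Qed.

Lemma L1B_of_link s t (y : V2) : AB red K s t y -> L1B red K s (s + t + 1) (of_link y).
Proof.
move=> [Hy Hb].
have gP A : {g : V1 | supp1 (link K A) (t - 1) g /\ slice y A = cobd (link K A) g}.
  exact/constructive_indefinite_description/Hb.
pose z : V2 := [ffun p : {set S} * {set S} =>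
  if [&& adm red p.1, p.1 \in K & dim p.1 == s] then sgnz #|p.1|.+1 (sval (gP p.1) p.2) else 0].
have Hz : Asupp red K s (t - 1) z.
  move=> [A B]; rewrite ffunE /=; case: ifP => [/and3P[a AK ds]|]; last by rewrite eqxx.
  by rewrite sgnz_eq0 => /(proj1 (svalP (gP A))) /andP[lk dt]; rewrite a AK ds lk dt.
have Hw : Tsupp red K s (s + t) (of_link z) by rewrite -[t](subrK 1) addrA; apply: Tsupp_of_link.
exists (of_link z); rewrite addrK; split=> //.
have Hv := Tsupp_vert Hw.
rewrite -(to_linkK (Tsupp_subset Hv)); congr of_link.
have Hy' := Asupp_to_link HK Hv.
apply/ffunP => -[A B].
have [/andP[a lk]|nalk] := boolP (adm red A && (B \in link K A)); last first.
  by rewrite (Asupp_eq0 Hy) ?(Asupp_eq0 Hy') //; apply: contra nalk => /and5P[-> _ _ -> _].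
rewrite (to_link_vert _ a lk) (of_linkK (Asupp_disjoint Hz)).
have AK : A \in K by move: lk; rewrite inE => /andP[/(HK.2.2 _ _)/(_ (subsetUl _ _))].
have [ds|nds] := eqVneq (dim A) s; last first.
  have -> : slice z A = 0 by apply/ffunP => r; rewrite !ffunE /= (negbTE nds) !andbF.
  by rewrite raddf0 ffunE raddf0 (Asupp_eq0 Hy) // (negbTE nds) !andbF.
have -> : slice z A = [ffun r => sgnz #|A|.+1 (sval (gP A) r)].
  by apply/ffunP => r; rewrite !ffunE /= a AK ds eqxx.
by rewrite cobd_sgnz ffunE sgnzK -(proj2 (svalP (gP A))) ffunE.
Qed.

Lemma first_page_links :
  exists Phi Psi : int -> int -> V2 -> V2,
    (forall s t : int,
       sq_iso (L1Z red K s (s + t + 1)) (L1B red K s (s + t + 1))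
              (AZ red K s t) (AB red K s t) (Phi s t) (Psi s t)) /\
    (forall (s t : int) (x : V2), L1Z red K s (s + t + 1) x ->
       AB red K (s - 1) (t + 1) (Phi (s - 1) (t + 1) (horiz red K x) - dA red (Phi s t x))).
Proof.
exists (fun _ _ => @to_link S G), (fun _ _ => @of_link S G); split=> [s t|s t x [Hx _]].
  split.
  - by apply: sq_hom_additive; [exact: AB0 | exact: AZ_to_link | exact: AB_to_link].
  - by apply: sq_hom_additive; [exact: L1B0 | exact: L1Z_of_link | exact: L1B_of_link].
  - by move=> x [Hx _]; rewrite (to_linkK (Tsupp_subset Hx)) subrr; apply: L1B0.
  - by move=> y [Hy _]; rewrite (of_linkK (Asupp_disjoint Hy)) subrr; apply: AB0.
by rewrite to_link_horiz ?subrr; [exact: AB0 | move=> p /Hx /and5P[]].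
Qed.

End FirstPage.

Section ReducedVsUnreduced.
Variables (S : finType) (G : zmodType) (K : {set {set S}}).
Local Notation V2 := {ffun {set S} * {set S} -> G}.
Implicit Types (x : V2) (s t : int) (red : bool).

Lemma adm_neq0 red (A : {set S}) : A != set0 -> adm red A.
Proof. by rewrite /adm => ->; rewrite orbT. Qed.

Lemma Tsupp_unreduced s t x : s != -1 -> Tsupp false K s t x <-> Tsupp true K s t x.
Proof.
move=> hs; split=> Hx p /Hx /and5P[_ -> -> ds ->]; rewrite ds !andbT //.
by apply: adm_neq0; rewrite -dim_eqN1 (eqP ds).
Qed.

Lemma vert_unreduced red s t x : Tsupp red K s t x -> s != -1 ->
  vert false K x = vert true K x.
Proof.
move=> Hx hs; apply/ffunP => -[A B]; rewrite !ffunE /=.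
have [->|_] := eqVneq A set0; last by [].
rewrite sub0set; case: ifP => // _; rewrite big1 ?raddf0 // => v _.
by rewrite (Tsupp_eq0 Hx) ?raddf0 // dim0 eq_sym (negbTE hs) !andbF.
Qed.

Lemma horiz_adm_neq0 red red' x (A B : {set S}) : A != set0 ->
  horiz red K x (A, B) = horiz red' K x (A, B).
Proof. by move=> nA; rewrite !ffunE !(adm_neq0 _ nA). Qed.

Lemma horiz_unreduced red s t x : Tsupp red K s t x -> s != 0 ->
  horiz false K x = horiz true K x.
Proof.
move=> Hx hs; apply/ffunP => -[A B]; rewrite !ffunE /=.
have [->|_] := eqVneq A set0; last by [].
rewrite sub0set; case: ifP => // _; rewrite big1 // => v _.
by rewrite setU0 (Tsupp_eq0 Hx) ?raddf0 // dim1 eq_sym (negbTE hs) !andbF.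
Qed.

Lemma L1Z_unreduced s t x : s != -1 -> L1Z false K s t x <-> L1Z true K s t x.
Proof.
move=> hs; split=> -[Hx Hv].
  by split; [apply/Tsupp_unreduced | rewrite -(vert_unreduced Hx hs)].
by split; [apply/Tsupp_unreduced | rewrite (vert_unreduced Hx hs)].
Qed.

Lemma L1B_unreduced s t x : s != -1 -> L1B false K s t x <-> L1B true K s t x.
Proof.
move=> hs; split=> -[y [Hy ->]]; exists y; rewrite (vert_unreduced Hy hs).
  by split; first apply/Tsupp_unreduced.
by split; first apply/Tsupp_unreduced.
Qed.

Lemma L2Z_unreduced s t x : 0 < s -> L2Z false K s t x <-> L2Z true K s t x.
Proof.
move=> s_gt0; have [sN1 s0 sB1] : [/\ s != -1, s != 0 & s - 1 != -1] by split; lia.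
split=> -[Hz Hb]; (split; first exact/L1Z_unreduced).
  by apply/L1B_unreduced; rewrite // -(horiz_unreduced Hz.1 s0).
by apply/L1B_unreduced; rewrite // (horiz_unreduced Hz.1 s0).
Qed.

Lemma L2B_unreduced s t x : 0 <= s -> L2B false K s t x <-> L2B true K s t x.
Proof.
move=> s_ge0; have [sN1 sD1N1 sD10] : [/\ s != -1, s + 1 != -1 & s + 1 != 0] by split; lia.
split=> -[y [z [Hy [Hz ->]]]]; exists y, z; rewrite (horiz_unreduced Hy.1 sD10).
  by split; [apply/L1Z_unreduced | split; first apply/L1B_unreduced].
by split; [apply/L1Z_unreduced | split; first apply/L1B_unreduced].
Qed.

End ReducedVsUnreduced.

Section ExactSequence.
Variables (S : finType) (G : zmodType) (K : {set {set S}}).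
Local Notation V1 := {ffun {set S} -> G}.
Local Notation V2 := {ffun {set S} * {set S} -> G}.
Implicit Types (x y w : V2) (g : V1) (t : int) (red : bool) (B : {set S}).

(* Column [s = -1] of T~ is C~(K), with vertical differential [- delta]. *)
Definition empty_column g : V2 :=
  [ffun p : {set S} * {set S} => if p.1 == set0 then g p.2 else 0].

Definition augment x : V1 := slice (horiz true K x) set0.

Definition vertex_sum x : V1 := [ffun B : {set S} => \sum_(v in B) x ([set v], B)].

Lemma empty_column_is_zmod_morphism : @zmod_morphism V1 V2 empty_column.
Proof. by move=> g h; apply/ffunP => p; rewrite !ffunE; case: ifP; rewrite ?subr0. Qed.

HB.instance Definition _ :=
  GRing.isZmodMorphism.Build V1 V2 empty_column empty_column_is_zmod_morphism.

Lemma augment_is_zmod_morphism : @zmod_morphism V2 V1 augment.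
Proof. by move=> x y; rewrite /augment raddfB sliceB. Qed.

HB.instance Definition _ :=
  GRing.isZmodMorphism.Build V2 V1 augment augment_is_zmod_morphism.

Lemma slice_empty_column g : slice (empty_column g) set0 = g.
Proof. by apply/ffunP => B; rewrite !ffunE eqxx. Qed.

Lemma augmentE x B : augment x B = if B \in K then vertex_sum x B else 0.
Proof.
rewrite !ffunE /= sub0set /=; case: ifP => // _.
by rewrite setD0; apply: eq_bigr => v _; rewrite count_lt0 setU0.
Qed.

Lemma empty_column_slice red t y : Tsupp red K (-1) t y -> y = empty_column (slice y set0).
Proof.
move=> Hy; apply/ffunP => -[A B]; rewrite !ffunE /=.
have [->//|nA] := eqVneq A set0.
by apply: (Tsupp_eq0 Hy); rewrite dim_eqN1 (negbTE nA) !andbF.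
Qed.

Lemma Tsupp_empty_column t g : supp1 K t g -> Tsupp true K (-1) t (empty_column g).
Proof.
move=> Hg [A B]; rewrite ffunE /=; have [->|] := eqVneq A set0; last by rewrite eqxx.
by move/Hg => /andP[-> ->]; rewrite sub0set dim0 eqxx.
Qed.

Lemma supp1_slice_set0 red t y : Tsupp red K (-1) t y -> supp1 K t (slice y set0).
Proof. by move=> Hy B; rewrite ffunE => /Hy /and5P[_ _ -> _ ->]. Qed.

Lemma vert_empty_column g : vert true K (empty_column g) = empty_column (- cobd K g).
Proof.
apply/ffunP => -[A B]; rewrite !ffunE /=.
have [->|nA] := eqVneq A set0; last first.
  by case: ifP => // _; rewrite big1 ?raddf0 // => v _; rewrite ffunE /= (negbTE nA) raddf0.
rewrite sub0set /=; case: ifP => _; last by rewrite oppr0.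
rewrite cards0 sgnzS setD0; congr (- _); apply: eq_bigr => v _; by rewrite ffunE /= eqxx.
Qed.

Lemma horiz_empty_column g : horiz true K (empty_column g) = 0.
Proof.
apply/ffunP => -[A B]; rewrite !ffunE /=; case: ifP => // _.
rewrite big1 // => v _; rewrite ffunE /=.
by case: eqP => [/setP/(_ v)|]; rewrite ?raddf0 // !inE eqxx.
Qed.

Lemma horiz_unreduced_col0 red t x : Tsupp red K 0 t x -> horiz false K x = 0.
Proof.
move=> Hx; apply/ffunP => -[A B]; rewrite !ffunE /=; case: ifP => // /and3P[nA _ _].
rewrite big1 // => v; rewrite inE => /andP[vA _].
rewrite (Tsupp_eq0 Hx) ?raddf0 //; rewrite /dim cardsU1 vA /=.
by move: nA; rewrite -card_gt0 eqz_nat => nA; apply/negP => /and5P[_ _ _ /eqP ? _]; lia.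
Qed.

Lemma horiz_reduced_col0 red t x : Tsupp red K 0 t x -> horiz true K x = empty_column (augment x).
Proof.
move=> Hx; apply/ffunP => -[A B]; rewrite [RHS]ffunE /=.
have [->|nA] := eqVneq A set0; first by rewrite /augment /slice [RHS]ffunE.
by rewrite (horiz_adm_neq0 K true false x B nA) (horiz_unreduced_col0 Hx) ffunE.
Qed.

Lemma vert_vertex_sum red w B : B \in K ->
  \sum_(v in B) vert red K w ([set v], B) = cobd K (vertex_sum w) B.
Proof.
move=> BK; rewrite ffunE BK.
under eq_bigr => v vB do
  rewrite ffunE /= (adm_neq0 _ (set1_neq0 v)) sub1set vB BK /= cards1 raddf_sum.
rewrite exchange_big_setD1; apply: eq_bigr => u _; rewrite ffunE raddf_sum.
by apply: eq_bigr.
Qed.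

Lemma augment_horiz_unreduced y : augment (horiz false K y) = 0.
Proof.
apply/ffunP => B; rewrite augmentE [RHS]ffunE; case: ifP => // BK.
rewrite ffunE.
under eq_bigr => v vB do rewrite ffunE /= set1_neq0 sub1set vB BK /=.
apply: sum_setD1_antisym => v w vw.
rewrite !count_lt1 [w |: _]setUC; have := vlt_total vw.
case: (boolP (vlt v w)) => vltw; case: (boolP (vlt w v)) => wltv //= _.
- by move: (vlt_asym vltw); rewrite wltv.
- by rewrite /sgnz /= opprK.
Qed.

Lemma L2B0 red s t : L2B red K s t (0 : V2).
Proof.
exists 0, 0; split; first by split; [apply: Tsupp0 | rewrite raddf0].
by split; [apply: L1B0 | rewrite raddf0 addr0].
Qed.

Lemma HB_augment t x : L2B false K 0 t x -> HB K t (augment x).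
Proof.
move=> [y [z [_ [[w [Hw ->]] ->]]]].
rewrite raddfD /= augment_horiz_unreduced add0r; exists (vertex_sum w); split.
  by move=> B; rewrite ffunE => /sumr_neq0_witness[v _ /Hw /and5P[_ _ -> _ ->]].
apply/ffunP => B; rewrite augmentE; case: ifP => BK; last by rewrite ffunE BK.
by rewrite ffunE vert_vertex_sum.
Qed.

Lemma L2Z_empty_column t g : HZ K t g -> L2Z true K (-1) t (empty_column g).
Proof.
move=> [Hg Hcg]; split; last by rewrite horiz_empty_column; apply: L1B0.
by split; [apply: Tsupp_empty_column | rewrite vert_empty_column Hcg !raddf0].
Qed.

Lemma L2B_empty_column t g : HB K t g -> L2B true K (-1) t (empty_column g).
Proof.
move=> [h [Hh ->]]; exists 0, (vert true K (empty_column (- h))).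
split; first by split; [apply: Tsupp0 | rewrite raddf0].
split; last by rewrite raddf0 add0r vert_empty_column !raddfN opprK.
by exists (empty_column (- h)); split=> //; apply/Tsupp_empty_column/supp1N.
Qed.

Lemma L2Z_reduced_col0 t x : L2Z true K 0 t x -> L2Z false K 0 t x.
Proof.
move=> [Hz _]; split; first exact/L1Z_unreduced.
by rewrite (horiz_unreduced_col0 Hz.1); apply: L1B0.
Qed.

Lemma HB_augment_reduced t x : L2Z true K 0 t x -> HB K t (augment x).
Proof.
move=> [_ [y [Hy hx]]]; rewrite sub0r in Hy.
exists (- slice y set0); split; first exact/supp1N/(supp1_slice_set0 Hy).
by rewrite /augment hx {1}(empty_column_slice Hy) vert_empty_column slice_empty_column raddfN.
Qed.

Lemma L2Z_reduced_of_augment t x : L2Z false K 0 t x -> HB K t (augment x) -> L2Z true K 0 t x.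
Proof.
move=> [Hz _] [h [Hh hx]]; split; first exact/L1Z_unreduced.
exists (empty_column (- h)); split; first by rewrite sub0r; apply/Tsupp_empty_column/supp1N.
by rewrite (horiz_reduced_col0 Hz.1) hx vert_empty_column !raddfN opprK.
Qed.

Lemma L2B_augment t x : L2Z false K 0 t x -> L2B true K (-1) t (empty_column (augment x)).
Proof.
move=> [Hz _]; exists x, 0; rewrite addr0 addNr (horiz_reduced_col0 Hz.1).
by split; [apply/L1Z_unreduced | split; first apply: L1B0].
Qed.

Lemma L2B_empty_column_augment t g : L2B true K (-1) t (empty_column g) ->
  exists2 x, L2Z false K 0 t x & HB K t (augment x - g).
Proof.
move=> [y [z [Hy [[w [Hw ez]] hg]]]]; rewrite addNr in Hy.
exists y; first by split; [apply/L1Z_unreduced | rewrite (horiz_unreduced_col0 Hy.1); apply: L1B0].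
exists (slice w set0); split; first exact: supp1_slice_set0 Hw.
have -> : augment y = slice (empty_column g - z) set0 by rewrite /augment hg addrK.
rewrite sliceB ez {1}(empty_column_slice Hw) vert_empty_column !slice_empty_column.
by rewrite opprK addrC addKr.
Qed.

Lemma empty_column_onto t y : L2Z true K (-1) t y ->
  exists2 g, HZ K t g & L2B true K (-1) t (empty_column g - y).
Proof.
move=> [[Hy Hvy] _]; exists (slice y set0).
  split; first exact: supp1_slice_set0 Hy.
  move: Hvy; rewrite {1}(empty_column_slice Hy) vert_empty_column.
  move/(congr1 (fun f : V2 => slice f set0)).
  by rewrite slice_empty_column slice0 => /eqP; rewrite oppr_eq0 => /eqP.
by rewrite -(empty_column_slice Hy) subrr; apply: L2B0.
Qed.

Hypothesis HK : simplicial_complex K.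

Lemma HZ_augment t x : L2Z false K 0 t x -> HZ K t (augment x).
Proof.
move=> [[Hx Hvx] _]; split.
  move=> B; rewrite augmentE; case: ifP => BK; last by rewrite eqxx.
  by rewrite ffunE => /sumr_neq0_witness[v _ /Hx /and5P[_ _ _ _ ->]].
have -> : cobd K (augment x) = cobd K (vertex_sum x).
  apply/ffunP => B; rewrite !ffunE; case: ifP => // BK; apply: eq_bigr => u _.
  by rewrite augmentE (HK.2.2 _ _ BK (subD1set _ _)).
apply/ffunP => B; rewrite [RHS]ffunE.
have [BK|nBK] := boolP (B \in K); last by rewrite ffunE (negbTE nBK).
by rewrite -(vert_vertex_sum false) // Hvx big1 // => v _; rewrite ffunE.
Qed.

Lemma exact_sequence t :
  exists (f1 : V2 -> V2) (f2 : V2 -> V1) (f3 : V1 -> V2),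
    sq_hom (L2Z true K 0 t) (L2B true K 0 t) (L2Z false K 0 t) (L2B false K 0 t) f1 /\
    sq_hom (L2Z false K 0 t) (L2B false K 0 t) (HZ K t) (HB K t) f2 /\
    sq_hom (HZ K t) (HB K t) (L2Z true K (-1) t) (L2B true K (-1) t) f3 /\
    sq_inj (L2Z true K 0 t) (L2B true K 0 t) (L2B false K 0 t) f1 /\
    sq_exact (L2Z true K 0 t) (L2Z false K 0 t) (L2B false K 0 t) (HB K t) f1 f2 /\
    sq_exact (L2Z false K 0 t) (HZ K t) (HB K t) (L2B true K (-1) t) f2 f3 /\
    sq_surj (HZ K t) (L2Z true K (-1) t) (L2B true K (-1) t) f3.
Proof.
exists idfun, augment, empty_column; split.
  apply: sq_hom_additive; [apply: L2B0 | apply: L2Z_reduced_col0 |].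
  by move=> x Hx; apply/L2B_unreduced.
split; first by apply: sq_hom_additive; [apply: HB0 | apply: HZ_augment | apply: HB_augment].
split.
  apply: sq_hom_additive; [apply: L2B0 | apply: L2Z_empty_column | apply: L2B_empty_column].
split; first by move=> x _ Hx; apply/L2B_unreduced.
split; first split.
- exact: HB_augment_reduced.
- move=> x Hx /(L2Z_reduced_of_augment Hx) Hx'; exists x.
  by rewrite subrr; split=> //; apply: L2B0.
split; first split.
- exact: L2B_augment.
- by move=> g _ /L2B_empty_column_augment[x Hx Hxg]; exists x.
by move=> y /empty_column_onto[g Hg Hgy]; exists g.
Qed.

End ExactSequence.

Theorem theorem4 (S : finType) (G : zmodType) (K : {set {set S}})
  (HK : simplicial_complex K) :
  (forall red : bool,
     exists Phi Psi : int -> int -> {ffun {set S} * {set S} -> G} -> {ffun {set S} * {set S} -> G},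
       (forall s t : int,
          sq_iso (L1Z red K s (s + t + 1)) (L1B red K s (s + t + 1))
                 (AZ red K s t) (AB red K s t) (Phi s t) (Psi s t)) /\
       (forall (s t : int) (x : {ffun {set S} * {set S} -> G}), L1Z red K s (s + t + 1) x ->
          AB red K (s - 1) (t + 1)
             (Phi (s - 1) (t + 1) (horiz red K x) - dA red (Phi s t x)))) /\
  (forall n : nat,
     exists (f1 : {ffun {set S} * {set S} -> G} -> {ffun {set S} * {set S} -> G}) (f2 : {ffun {set S} * {set S} -> G} -> {ffun {set S} -> G})
            (f3 : {ffun {set S} -> G} -> {ffun {set S} * {set S} -> G}),
       sq_hom (L2Z true K 0 n) (L2B true K 0 n) (L2Z false K 0 n) (L2B false K 0 n) f1 /\
           sq_hom (L2Z false K 0 n) (L2B false K 0 n) (HZ K n) (HB K n) f2 /\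
           sq_hom (HZ K n) (HB K n) (L2Z true K (-1) n) (L2B true K (-1) n) f3 /\
           sq_inj (L2Z true K 0 n) (L2B true K 0 n) (L2B false K 0 n) f1 /\
           sq_exact (L2Z true K 0 n) (L2Z false K 0 n) (L2B false K 0 n) (HB K n) f1 f2 /\
           sq_exact (L2Z false K 0 n) (HZ K n) (HB K n) (L2B true K (-1) n) f2 f3 /\
           sq_surj (HZ K n) (L2Z true K (-1) n) (L2B true K (-1) n) f3) /\
  (forall s n : int, 0 < s ->
     (forall x : {ffun {set S} * {set S} -> G}, L2Z false K s n x <-> L2Z true K s n x) /\
     (forall x : {ffun {set S} * {set S} -> G}, L2B false K s n x <-> L2B true K s n x)).
Proof.
split; first by move=> red; apply: first_page_links.
split; first by move=> n; apply: exact_sequence.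
by move=> s n s_gt0; split=> x; [apply: L2Z_unreduced | apply/L2B_unreduced/ltW].
Qed.
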